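(* Consider counterexamples of the following form: $G$ is a planar graph containing no $3$-cycle, $4$-cycle and $5$-cycle that are pairwise adjacent, $C_0$ is a $3$-cycle of $G$, $s\ge1$, $H$ is a cover of $G$ with respect to $L(v)=\{1,\dots,s\}$ for all $v$, $F=(f_1,\dots,f_s)$ with $f_i(v)\in\{0,1,2\}$ and $f_1(v)+\cdots+f_s(v)\ge4$ for all $v$, and $R_0$ is a DP-$F$-coloring of $C_0$ (with respect to the restriction of $H$ to the vertices over $V(C_0)$) that cannot be extended to a DP-$F$-coloring of $(G,H)$. If such a counterexample has $|V(G)|$ minimum, then every vertex of $G$ not on $C_0$ has degree at least $4$.
   Context: Two cycles are adjacent if they share an edge. A cover $H$ of $G$ w.r.t. $L$ has vertex set $\{(u,c):c\in L(u)\}$, each $\{u\}\times L(u)$ is a clique, for each edge $uv$ the edges between $\{u\}\times L(u)$ and $\{v\}\times L(v)$ form a matching, and there are no such edges for non-adjacent $u,v$. A representative set contains exactly one vertex of each $\{v\}\times L(v)$. A DP-$F$-coloring is a representative set $R$ admitting an ordering in which each $(v,i)\in R$ has fewer than $f_i(v)$ $H$-neighbors among earlier elements of $R$; extending $R_0$ means finding a DP-$F$-coloring of $(G,H)$ containing $R_0$. *)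

From HB Require Import structures.
From mathcomp Require Import all_boot all_order all_algebra.
From mathcomp Require Import classical_sets topology normedtype Rstruct Rstruct_topology.
From Stdlib Require Import Rdefinitions.

Set Implicit Arguments.
Unset Strict Implicit.
Unset Printing Implicit Defensive.

Import Order.TTheory GRing.Theory Num.Theory.

Definition simple_graph (T : finType) (G : rel T) : Prop :=
  symmetric G /\ irreflexive G.

(* Planarity: a drawing in the real plane R^2.  Vertices go to distinct points,
   each edge uv to a Jordan arc (continuous injective map on [0,1]) from p u to p v
   (the arc for vu is the reverse of the arc for uv); the interior of an arc
   meets no vertex point, and interiors of arcs of distinct edges are disjoint. *)
Local Open Scope ring_scope.
Definition planar (T : finType) (G : rel T) : Prop :=
  exists (p : T -> (R * R)%type) (a : T -> T -> R -> (R * R)%type),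
    injective p /\
    (forall u v, G u v ->
       [/\ a u v 0 = p u /\ a u v 1 = p v,
           {within [set t : R | 0 <= t <= 1], continuous (a u v)}%classic,
           (forall t t', 0 <= t <= 1 -> 0 <= t' <= 1 -> a u v t = a u v t' -> t = t'),
           (forall t, 0 <= t <= 1 -> a v u t = a u v (1 - t)) &
           (forall t w, 0 < t < 1 -> a u v t <> p w)]) /\
    (forall u v x y, G u v -> G x y -> [set u; v] != [set x; y] ->
       forall t t', 0 < t < 1 -> 0 < t' < 1 -> a u v t <> a x y t').
Local Close Scope ring_scope.

Definition is_kcycle (T : finType) (G : rel T) (k : nat) (c : seq T) : Prop :=
  [/\ 3 <= k, size c = k, uniq c & cycle G c].

Definition cycle_edge (T : finType) (c : seq T) (x y : T) : bool :=
  ((x \in c) && (y == next c x)) || ((y \in c) && (x == next c y)).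

Definition adjacent_cycles (T : finType) (c1 c2 : seq T) : Prop :=
  exists x y, cycle_edge c1 x y /\ cycle_edge c2 x y.

Definition no_adj_345 (T : finType) (G : rel T) : Prop :=
  ~ exists c3 c4 c5 : seq T,
      [/\ is_kcycle G 3 c3 /\ is_kcycle G 4 c4 /\ is_kcycle G 5 c5,
          adjacent_cycles c3 c4, adjacent_cycles c3 c5 & adjacent_cycles c4 c5].

(* H is a cover of G w.r.t. L(v) = {1,...,s} for all v; colours are represented by
   'I_s = {0,...,s-1}, so (v, c) stands for (v, c+1). *)
Definition is_cover (T : finType) (G : rel T) (s : nat) (H : rel (T * 'I_s)) : Prop :=
  [/\ simple_graph H,
      (forall v (c d : 'I_s), c != d -> H (v, c) (v, d)),
      (forall u v, u != v -> G u v -> forall c : 'I_s,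
          #|[set d : 'I_s | H (u, c) (v, d)]| <= 1) &
      (forall u v, u != v -> ~~ G u v -> forall c d : 'I_s, ~~ H (u, c) (v, d))].

(* R is a DP-F-colouring of the cover H restricted to the fibres over S:
   R is a representative set over S (exactly one element in each fibre {v} x L(v),
   v in S, and nothing else), admitting an ordering in which each (v,i) in R has
   fewer than f_i(v) H-neighbours among the earlier elements. *)
Definition dp_coloring (T : finType) (s : nat) (H : rel (T * 'I_s))
    (f : 'I_s -> T -> nat) (S : {set T}) (R : {set T * 'I_s}) : Prop :=
  [/\ R \subset [set x | x.1 \in S],
      (forall v, v \in S -> #|[set c : 'I_s | (v, c) \in R]| = 1) &
      exists ord : seq (T * 'I_s),
        perm_eq ord (enum R) /\
        forall pre x post, ord = pre ++ x :: post ->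
          #|[set y in pre | H y x]| < f x.2 x.1].

Definition counterexample (T : finType) (G : rel T) (C0 : seq T) (s : nat)
    (H : rel (T * 'I_s)) (f : 'I_s -> T -> nat) (R0 : {set T * 'I_s}) : Prop :=
  [/\ simple_graph G /\ planar G /\ no_adj_345 G, is_kcycle G 3 C0,
      1 <= s /\ is_cover G H,
      [/\ forall i v, f i v <= 2 & forall v, 4 <= \sum_(i < s) f i v] /\
      dp_coloring H f [set x in C0] R0 &
      ~ exists R, dp_coloring H f [set: T] R /\ R0 \subset R].

From mathcomp Require Import all_boot all_order.

Set Implicit Arguments.
Unset Strict Implicit.
Unset Printing Implicit Defensive.

(* If v is not on C0 and has degree at most 3, the cover, the weights and R0
   restrict to G - v, which is again a counterexample (planarity and the
   excluded configuration pass to induced subgraphs) with fewer vertices.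
   This contradicts minimality: a DP-F-colouring of G - v extending R0 extends
   to G by colouring v last, since every coloured vertex is H-adjacent to at
   most one vertex of the fibre of v, and only if it lies over a neighbour of
   v, so at most deg v < 4 <= f_1(v) + ... + f_s(v) of the thresholds f_i(v)
   can be reached. *)

Definition degenerate_seq (A : finType) (E : rel A) (w : A -> nat) (s : seq A) : Prop :=
  forall pre x post, s = pre ++ x :: post -> #|[set y in pre | E y x]| < w x.

Definition degenerate_set (A : finType) (E : rel A) (w : A -> nat) (R : {set A}) : Prop :=
  exists ord, perm_eq ord (enum R) /\ degenerate_seq E w ord.

Lemma map_preimage_seq (A B : eqType) (h : A -> B) (s : seq B) :
  (forall y, y \in s -> exists x, h x = y) -> exists t, map h t = s.
Proof.
elim: s => [|y s IHs] hs; first by exists [::].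
have [x <-] := hs y (mem_head _ _).
have [t <-] : exists t, map h t = s by apply: IHs => z zs; apply: hs; rewrite inE zs orbT.
by exists (x :: t).
Qed.

Lemma degenerate_seq_rcons (A : finType) (E : rel A) (w : A -> nat) s x :
  degenerate_seq E w s -> #|[set y in s | E y x]| < w x ->
  degenerate_seq E w (rcons s x).
Proof.
move=> degs degx pre z post; case/lastP: post => [|post t].
  by rewrite cats1 => /eqP; rewrite eqseq_rcons => /andP[/eqP <- /eqP <-].
rewrite -rcons_cons -rcons_cat => /eqP; rewrite eqseq_rcons => /andP[/eqP es _].
exact: degs es.
Qed.

Section DegenerateTransfer.

Variables (A B : finType) (h : A -> B) (E : rel A) (E' : rel B).
Variables (w : A -> nat) (w' : B -> nat).
Hypotheses (h_inj : injective h) (hE : forall x y, E x y = E' (h x) (h y)).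
Hypothesis hw : forall x, w x = w' (h x).

Lemma card_nbrs_map (s : seq A) x :
  #|[set y in map h s | E' y (h x)]| = #|[set y in s | E y x]|.
Proof.
rewrite -(card_imset _ h_inj); apply: eq_card => z; rewrite !inE.
apply/andP/imsetP => [[/mapP[y ys ->] Ey]|[y]]; first by exists y; rewrite // inE ys hE.
by rewrite inE hE => /andP[ys Ey] ->; rewrite map_f.
Qed.

Lemma degenerate_seq_map s : degenerate_seq E w s <-> degenerate_seq E' w' (map h s).
Proof.
split=> degs pre x post es.
  have ex : map h (drop (size pre) s) = x :: post by rewrite map_drop es drop_size_cat.
  case ds: (drop (size pre) s) ex => [|x' post'] //= [<- _].
  have <- : map h (take (size pre) s) = pre by rewrite map_take es take_size_cat.
  rewrite card_nbrs_map -hw; apply: (degs _ _ post').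
  by rewrite -ds cat_take_drop.
by rewrite -card_nbrs_map hw; apply: (degs _ _ (map h post)); rewrite es map_cat.
Qed.

Lemma perm_map_enum (R : {set A}) : perm_eq (map h (enum R)) (enum (h @: R)).
Proof.
apply: uniq_perm; [by rewrite (map_inj_uniq h_inj) enum_uniq | exact: enum_uniq |].
move=> z; rewrite mem_enum; apply/mapP/imsetP => -[y];
  by [rewrite mem_enum => yR ->; exists y | move=> yR ->; exists y; rewrite ?mem_enum].
Qed.

Lemma degenerate_set_imset R : degenerate_set E w R <-> degenerate_set E' w' (h @: R).
Proof.
split=> -[ord [perm_ord deg_ord]].
  exists (map h ord); split; last exact/degenerate_seq_map.
  exact: perm_trans (perm_map h perm_ord) (perm_map_enum R).
have [t ht] : exists t, map h t = ord.
  apply: map_preimage_seq => y; rewrite (perm_mem perm_ord) mem_enum.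
  by case/imsetP=> x _ ->; exists x.
exists t; split; last by apply/degenerate_seq_map; rewrite ht.
apply: (perm_map_inj h_inj); rewrite ht.
by apply: perm_trans perm_ord _; rewrite perm_sym perm_map_enum.
Qed.

End DegenerateTransfer.

Lemma sum_nat_bool_card (I : finType) (A : {pred I}) (P : pred I) :
  \sum_(i in A) (P i : nat) = #|[set i in A | P i]|.
Proof. by rewrite -sum1dep_card big_mkcondr; apply: eq_bigr => i _; case: (P i). Qed.

Section GreedyExtension.

Variables (T : finType) (G : rel T) (s : nat) (H : rel (T * 'I_s)).
Variable f : 'I_s -> T -> nat.
Hypotheses (G_sym : symmetric G) (H_cover : is_cover G H).

Lemma card_cover_nbrs u v (c : 'I_s) :
  u != v -> #|[set i | H (u, c) (v, i)]| <= G v u.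
Proof.
case: H_cover => _ _ H_match H_nonadj uv; rewrite G_sym.
case Guv: (G u v); first exact: H_match.
rewrite leqn0 cards_eq0; apply/eqP/setP => i; rewrite !inE.
by apply/negbTE/H_nonadj; rewrite ?Guv.
Qed.

Lemma sum_card_cover_nbrs v R :
  dp_coloring H f [set~ v] R ->
  \sum_(i < s) #|[set y in R | H y (v, i)]| <= #|[set u | G v u]|.
Proof.
case=> /subsetP R_sub R_fib _.
have R_v y : y \in R -> y.1 != v by move/R_sub; rewrite !inE.
under eq_bigr do rewrite -sum_nat_bool_card.
rewrite exchange_big /=.
apply: (@leq_trans (\sum_(y in R) (G v y.1 : nat))).
  apply: leq_sum => -[u c] /R_v /= uv.
  by rewrite (sum_nat_bool_card _ (fun i => H (u, c) (v, i))) card_cover_nbrs.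
rewrite sum_nat_bool_card -(@card_in_imset _ _ fst).
  by apply/subset_leq_card/subsetP => u /imsetP[y]; rewrite !inE => /andP[_ Gvy] ->.
move=> [u c1] [u' c2]; rewrite !inE /= => /andP[y1R _] /andP[y2R _] eu; subst u'.
have /cards1P[c fib_u] : #|[set c | (u, c) \in R]| == 1.
  by rewrite R_fib // !inE (R_v _ y1R).
have : c1 \in [set c | (u, c) \in R] by rewrite inE.
have : c2 \in [set c | (u, c) \in R] by rewrite inE.
by rewrite fib_u !inE => /eqP -> /eqP ->.
Qed.

Lemma dp_coloring_extend v R :
  dp_coloring H f [set~ v] R -> #|[set u | G v u]| < \sum_(i < s) f i v ->
  exists i, dp_coloring H f [set: T] ((v, i) |: R).
Proof.
move=> dpR deg; have blocked_le_deg := sum_card_cover_nbrs dpR.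
case: dpR => /subsetP R_sub R_fib [ord [perm_ord deg_ord]].
have R_v y : y \in R -> y.1 != v by move/R_sub; rewrite !inE.
have vR i : (v, i) \notin R by apply/negP => /R_v; rewrite eqxx.
have [i free_i | all_blocked] :=
  pickP (fun i : 'I_s => #|[set y in R | H y (v, i)]| < f i v); last first.
  have : \sum_(i < s) f i v <= \sum_(i < s) #|[set y in R | H y (v, i)]|.
    by apply: leq_sum => i _; rewrite leqNgt all_blocked.
  by move/leq_trans/(_ blocked_le_deg); rewrite leqNgt deg.
exists i; split.
- by apply/subsetP => x _; rewrite !inE.
- move=> u _; have [->|uv] := eqVneq u v.
    rewrite (_ : [set c | _] = [set i]) ?cards1 //; apply/setP => c.
    by rewrite !inE xpair_eqE eqxx (negbTE (vR c)) orbF.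
  rewrite -(R_fib u); last by rewrite !inE.
  by apply: eq_card => c; rewrite !inE xpair_eqE (negbTE uv).
- exists (rcons ord (v, i)); split.
    apply: uniq_perm; rewrite ?enum_uniq //.
      by rewrite rcons_uniq (perm_uniq perm_ord) enum_uniq (perm_mem perm_ord) mem_enum vR.
    by move=> z; rewrite mem_rcons in_cons mem_enum in_setU1 (perm_mem perm_ord) mem_enum.
  apply: (@degenerate_seq_rcons _ _ (fun x => f x.2 x.1)) => //=.
  rewrite (_ : [set y in ord | _] = [set y in R | H y (v, i)]) //.
  by apply/setP => y; rewrite !inE (perm_mem perm_ord) mem_enum.
Qed.

End GreedyExtension.

Section InducedSubgraph.

Variables (T : finType) (P : pred T).

Definition induced (G : rel T) : rel {x | P x} := fun x y => G (val x) (val y).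

Lemma simple_graph_induced G : simple_graph G -> simple_graph (induced G).
Proof. by case=> G_sym G_irr; split=> [x y | x]; [exact: G_sym | exact: G_irr]. Qed.

Lemma planar_induced G : planar G -> planar (induced G).
Proof.
case=> p [a [p_inj [arc disjoint]]].
exists (fun x => p (val x)), (fun x y => a (val x) (val y)); split.
  by move=> x y /p_inj /val_inj.
split=> [u w /arc[ends cont inj rev avoid] | u w x y Guw Gxy neq].
  by split=> // t z; exact: avoid.
apply: disjoint => //; apply: contra neq => /eqP E; apply/eqP.
by apply: (imset_inj val_inj); rewrite !imsetU1 !imset_set1.
Qed.

Lemma is_kcycle_induced G k (c : seq {x | P x}) :
  is_kcycle (induced G) k c <-> is_kcycle G k (map val c).
Proof.
rewrite /is_kcycle size_map (map_inj_uniq val_inj) cycle_map.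
by split=> -[].
Qed.

Lemma cycle_edge_induced (c : seq {x | P x}) x y :
  uniq c -> cycle_edge (map val c) (val x) (val y) = cycle_edge c x y.
Proof.
by move=> c_uniq; rewrite /cycle_edge !(mem_map val_inj) !(next_map val_inj) // !val_eqE.
Qed.

Lemma no_adj_345_induced G : no_adj_345 G -> no_adj_345 (induced G).
Proof.
move=> noG [c3 [c4 [c5 [[k3 [k4 k5]] a34 a35 a45]]]]; apply: noG.
have adj_map k k' c c' : is_kcycle (induced G) k c -> is_kcycle (induced G) k' c' ->
    adjacent_cycles c c' -> adjacent_cycles (map val c) (map val c').
  move=> [_ _ uc _] [_ _ uc' _] [x [y [e e']]]; exists (val x), (val y).
  by rewrite !cycle_edge_induced.
exists (map val c3), (map val c4), (map val c5).
split; first by split; [|split]; apply/is_kcycle_induced.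
- exact: adj_map k3 k4 a34.
- exact: adj_map k3 k5 a35.
- exact: adj_map k4 k5 a45.
Qed.

Section InducedCover.

Variables (s : nat) (H : rel (T * 'I_s)) (f : 'I_s -> T -> nat).

Definition lift_vertex (x : {x | P x} * 'I_s) : T * 'I_s := (val x.1, x.2).

Definition induced_cover : rel ({x | P x} * 'I_s) :=
  fun x y => H (lift_vertex x) (lift_vertex y).

Definition induced_weight : 'I_s -> {x | P x} -> nat := fun i x => f i (val x).

Lemma lift_vertex_inj : injective lift_vertex.
Proof. by move=> [a c] [b d] [/val_inj -> ->]. Qed.

Lemma is_cover_induced G : is_cover G H -> is_cover (induced G) induced_cover.
Proof.
case=> [[H_sym H_irr] H_fib H_match H_nonadj]; split.
- by split=> [x y | x]; [exact: H_sym | exact: H_irr].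
- by move=> u c d; exact: H_fib.
- by move=> u w uw; apply: H_match; rewrite val_eqE.
- by move=> u w uw; apply: H_nonadj; rewrite val_eqE.
Qed.

Lemma dp_coloring_induced (S : {set {x | P x}}) R :
  dp_coloring induced_cover induced_weight S R <->
  dp_coloring H f (val @: S) (lift_vertex @: R).
Proof.
have fibre u : [set c | (val u, c) \in lift_vertex @: R] = [set c | (u, c) \in R].
  apply/setP => c; rewrite !inE.
  have -> : (val u, c) = lift_vertex (u, c) by [].
  by rewrite (mem_imset _ _ lift_vertex_inj).
have sub_iff : R \subset [set x | x.1 \in S] <->
    lift_vertex @: R \subset [set x | x.1 \in val @: S].
  split=> /subsetP sub.
    apply/subsetP => _ /imsetP[x xR ->].
    by rewrite !inE /= (mem_imset _ _ val_inj); have := sub x xR; rewrite inE.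
  apply/subsetP => x xR; have := sub _ (imset_f _ xR).
  by rewrite !inE /= (mem_imset _ _ val_inj).
have fib_iff : (forall u, u \in S -> #|[set c | (u, c) \in R]| = 1) <->
    (forall u, u \in val @: S -> #|[set c | (u, c) \in lift_vertex @: R]| = 1).
  split=> fib u; last by move=> uS; rewrite -fibre fib ?(mem_imset _ _ val_inj).
  by case/imsetP=> u' u'S ->; rewrite fibre fib.
have deg_iff := degenerate_set_imset lift_vertex_inj (E := induced_cover) (E' := H)
  (fun _ _ => erefl) (w := fun x => induced_weight x.2 x.1) (w' := fun x => f x.2 x.1)
  (fun _ => erefl) R.
by split=> -[sub fib deg]; split; by [apply/sub_iff | apply/fib_iff | apply/deg_iff].
Qed.

End InducedCover.

End InducedSubgraph.

Arguments induced {T} P G _ _.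
Arguments induced_cover {T} P {s} H _ _.
Arguments induced_weight {T} P {s} f _ _.
Arguments lift_vertex {T P s} x.
Arguments dp_coloring_induced {T P s H f S R}.

Lemma imset_val_setT (T : finType) (P : pred T) : val @: [set: {x | P x}] = [set x | P x].
Proof.
apply/setP => x; rewrite inE; apply/imsetP/idP => [[y _ ->] | Px]; first exact: valP.
by exists (Sub x Px); rewrite ?SubK.
Qed.

Lemma counterexample_delete_vertex (T : finType) (G : rel T) (C0 : seq T) (s : nat)
    (H : rel (T * 'I_s)) (f : 'I_s -> T -> nat) (R0 : {set T * 'I_s}) (v : T) :
  counterexample G C0 H f R0 -> v \notin C0 -> #|[set u | G v u]| < 4 ->
  exists C0' R0', counterexample (induced (predC1 v) G) C0'
    (induced_cover (predC1 v) H) (induced_weight (predC1 v) f) R0'.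
Proof.
move=> [[G_simple [G_planar G_no345]] C0_cycle [s_gt0 H_cover] [f_bounds R0_col] R0_noext].
move=> vC0 deg_v.
have C0_v : all (predC1 v) C0 by apply/allP => u uC0; apply: contraNneq vC0 => <-.
pose C0' := pmap insub C0 : seq {x | predC1 v x}.
have val_C0' : map val C0' = C0.
  by rewrite /C0' (pmap_filter (insubK _)) (eq_filter (isSome_insub _)); apply/all_filterP.
have val_C0'_set : val @: [set x in C0'] = [set x in C0].
  apply/setP => u; rewrite inE -val_C0'.
  by apply/imsetP/mapP => -[x]; rewrite ?inE => xC ->; exists x; rewrite ?inE.
pose R0' : {set {x | predC1 v x} * 'I_s} := lift_vertex @^-1: R0.
have lift_R0' : lift_vertex @: R0' = R0.
  apply/setP => -[u c]; apply/imsetP/idP => [[y] | uc_R0]; first by rewrite inE => + ->.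
  have uC0 : u \in C0 by case: R0_col => /subsetP/(_ _ uc_R0); rewrite !inE.
  by exists (Sub u (allP C0_v _ uC0), c); rewrite ?inE.
exists C0', R0'; split.
- split; first exact: simple_graph_induced.
  by split; [exact: planar_induced | exact: no_adj_345_induced].
- by apply/is_kcycle_induced; rewrite val_C0'.
- by split; last exact: is_cover_induced.
- have [f_le2 f_sum] := f_bounds.
  split; first by split=> [i x | x]; [exact: f_le2 | exact: f_sum].
  by apply/dp_coloring_induced; rewrite val_C0'_set lift_R0'.
move=> [R' [R'_col R0'_sub]]; apply: R0_noext.
move/dp_coloring_induced: R'_col; rewrite imset_val_setT.
rewrite (_ : [set x | predC1 v x] = [set~ v]); last by apply/setP => x; rewrite !inE.
move=> R'_col.
have [|i col_i] := dp_coloring_extend G_simple.1 H_cover R'_col.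
  by apply: leq_trans deg_v _; case: f_bounds.
exists ((v, i) |: lift_vertex @: R'); split => //.
rewrite -lift_R0'; apply/subsetP => x x_R0.
by rewrite inE (subsetP (imsetS _ R0'_sub)) ?orbT.
Qed.

Theorem lemma4 (T : finType) (G : rel T) (C0 : seq T) (s : nat)
    (H : rel (T * 'I_s)) (f : 'I_s -> T -> nat) (R0 : {set T * 'I_s}) :
  counterexample G C0 H f R0 ->
  (forall (T' : finType) (G' : rel T') (C0' : seq T') (s' : nat)
          (H' : rel (T' * 'I_s')) (f' : 'I_s' -> T' -> nat) (R0' : {set T' * 'I_s'}),
      counterexample G' C0' H' f' R0' -> #|T| <= #|T'|) ->
  forall v : T, v \notin C0 -> 4 <= #|[set u | G v u]|.
Proof.
move=> counter minimal v vC0; rewrite leqNgt; apply/negP => deg_v.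
have [C0' [R0' counter']] := counterexample_delete_vertex counter vC0 deg_v.
have := minimal _ _ _ _ _ _ _ counter'.
have T_gt0 : 0 < #|T| by apply/card_gt0P; exists v.
have -> : #|{: {x | predC1 v x}}| = #|T|.-1.
  by rewrite card_sig -(cardC1 v); apply: (@eq_card _ _ (predC1 v)).
by rewrite leqNgt ltn_predL T_gt0.
Qed.
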